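(* Let $H$ be a diagonal Hamiltonian on $n$ qubits with real diagonal entries $H_{z,z}$, $z\in\{0,1\}^n$. Let $\delta:=\max_{\ell\in\mathbb{R}}|\{z\in\{0,1\}^n: H_{z,z}=\ell\}|/2^n$. Fix arbitrary real parameters $\beta_1,\gamma_1,\beta_2,\gamma_2,\dots$, and for $p\ge 0$ let $\ket{\psi_p}=\sum_z \alpha_{p,z}\ket{z}$ be the QAOA state of depth $p$, $$\ket{\psi_p}=\Big[\prod_{i=1}^{p}U_B(\beta_i)U_C(\gamma_i)\Big]\mathrm{Had}^{\otimes n}\ket{0}^{\otimes n},$$ where $U_C(\gamma)=e^{-i\gamma H}$, $U_B(\beta)=e^{-i\beta\sum_{k=1}^n\sigma_X^k}=(e^{-i\beta\sigma_X})^{\otimes n}$, $\mathrm{Had}$ is the Hadamard gate, and the product is ordered so that $U_B(\beta_1)U_C(\gamma_1)$ is applied first. For $p\ge0$ let $\Delta_p:=\min_{t\le p}\max_{u\in\mathbb{C}}|\{z\in\{0,1\}^n:\alpha_{t,z}=u\}|/2^n$. Then $\Delta_0=1$, and for every $p\ge1$ and every $z\in\{0,1\}^n$, $$|\alpha_{p,z}|\le\big(2^{n+1}(2-\Delta_{p-1}-\delta)+1\big)^{p}\,\frac{1}{\sqrt{2^n}}.$$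
   Context: $\sigma_X^k$ denotes the Pauli X matrix $\begin{pmatrix}0&1\\1&0\end{pmatrix}$ acting on qubit $k$. $\delta$ is the maximum fraction of computational basis states sharing the same diagonal value of $H$; $\Delta_p$ is the minimum over depths $t\le p$ of the maximum fraction of amplitudes of $\ket{\psi_t}$ that are all equal to a common complex value. *)

From Stdlib Require Import Reals List Arith.
Import ListNotations.
Open Scope R_scope.

Definition C : Type := (R * R)%type.
Definition Cadd (a b : C) : C := (fst a + fst b, snd a + snd b).
Definition Cmul (a b : C) : C :=
  (fst a * fst b - snd a * snd b, fst a * snd b + snd a * fst b).
Definition Cnorm (a : C) : R := sqrt (fst a * fst a + snd a * snd a).
Definition Ceqb (a b : C) : bool :=
  if Req_EM_T (fst a) (fst b) then
    if Req_EM_T (snd a) (snd b) then true else false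
  else false.
Definition Reqb (a b : R) : bool := if Req_EM_T a b then true else false.

(* Basis states z in {0,1}^n are encoded as naturals 0 <= z < 2^n;
   qubit k (0 <= k < n) is bit k of z. A state is a function nat -> C
   (only values on z < 2^n matter). *)
Definition basis (n : nat) : list nat := seq 0 (2 ^ n)%nat.

(* U_C(gamma) = exp(-i gamma H), H diagonal with entries Hd z *)
Definition UC (Hd : nat -> R) (g : R) (psi : nat -> C) : nat -> C :=
  fun z => Cmul (cos (g * Hd z), - sin (g * Hd z)) (psi z).

(* exp(-i beta sigma_X) = cos beta I - i sin beta X acting on qubit k *)
Definition UBk (b : R) (k : nat) (psi : nat -> C) : nat -> C :=
  fun z => Cadd (Cmul (cos b, 0) (psi z))
                (Cmul (0, - sin b) (psi (Nat.lxor z (2 ^ k)%nat))).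

(* U_B(beta) = (exp(-i beta sigma_X))^{tensor n} *)
Definition UB (n : nat) (b : R) (psi : nat -> C) : nat -> C :=
  fold_right (fun k acc => UBk b k acc) psi (seq 0 n).

(* Had^{tensor n} |0...0> : uniform superposition *)
Definition psi0 (n : nat) : nat -> C := fun _ => (1 / sqrt (2 ^ n), 0).

(* QAOA state of depth p; beta i, gamma i used for i = 1..p,
   with U_B(beta_1) U_C(gamma_1) applied first *)
Fixpoint qaoa (n : nat) (Hd : nat -> R) (beta gamma : nat -> R) (p : nat)
  : nat -> C :=
  match p with
  | O => psi0 n
  | S q => UB n (beta (S q)) (UC Hd (gamma (S q)) (qaoa n Hd beta gamma q))
  end.

(* delta = max_l |{z : H_zz = l}| / 2^n  (max attained at some l = H_ww) *)
Definition countR (n : nat) (Hd : nat -> R) (l : R) : nat :=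
  length (filter (fun w => Reqb (Hd w) l) (basis n)).
Definition deltaH (n : nat) (Hd : nat -> R) : R :=
  fold_right Rmax 0
    (map (fun z => INR (countR n Hd (Hd z)) / 2 ^ n) (basis n)).

Definition countC (n : nat) (a : nat -> C) (u : C) : nat :=
  length (filter (fun w => Ceqb (a w) u) (basis n)).
Definition maxfracC (n : nat) (a : nat -> C) : R :=
  fold_right Rmax 0
    (map (fun z => INR (countC n a (a z)) / 2 ^ n) (basis n)).

Definition DeltaQ (n : nat) (Hd : nat -> R) (beta gamma : nat -> R) (p : nat) : R :=
  fold_right Rmin (maxfracC n (qaoa n Hd beta gamma 0))
    (map (fun t => maxfracC n (qaoa n Hd beta gamma t)) (seq 0 (S p))).

(* Let psi be an amplitude vector on {0,1}^n bounded by M, u its most frequent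
   amplitude (taken on a fraction maxfrac(psi) >= D of the basis) and l the most
   frequent diagonal entry of H (a fraction delta).  On the set S where psi = u and
   H = l, the vector U_C(g) psi is the constant c = e^{-i g l} u, and the complement
   of S has at most (2 - D - delta) 2^n points.  The mixer U_B(b) is a tensor power
   of the 2x2 matrix with entries cos b and -i sin b; hence
   (i)  it sends the constant vector c to e^{-i n b} c, and
   (ii) each output amplitude is bounded by the l1 norm of the input, since it is a
        combination with coefficients of modulus <= 1 of the input amplitudes on the
        orbit of z under all bit flips, and that orbit is the whole basis.
   Writing U_B U_C psi = e^{-i n b} c + U_B (U_C psi - c) bounds every amplitude by
   M + 2M (2 - D - delta) 2^n.  Iterating from the uniform state (amplitudes
   1/sqrt(2^n)) with D = Delta_{p-1} <= maxfrac(psi_t) for t < p gives the theorem;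
   Delta_0 = 1 because the uniform state is constant. *)

From Pilot Require Import Defs.
From Stdlib Require Import Reals List Arith Lia Lra Permutation.
From Coquelicot Require Import Complex.
Import ListNotations.
Open Scope R_scope.

(* The complex operations of Defs are Coquelicot's, so its modulus and field laws apply. *)
Lemma Cnorm_Cmod (a : C) : Cnorm a = Cmod a.
Proof. unfold Cnorm, Cmod. f_equal. simpl. ring. Qed.

(* phase t = e^{-i t}, the factor by which U_C and the mixer rotate amplitudes. *)
Definition phase (t : R) : C := (cos t, - sin t).

Lemma Cmod_phase (t : R) : Cmod (phase t) = 1.
Proof.
  unfold Cmod, phase; cbn [fst snd]. rewrite <- sqrt_1. f_equal.
  pose proof (sin2_cos2 t) as H. unfold Rsqr in H. nra.
Qed.

(* The entries cos b and -i sin b of the 2x2 matrix exp(-i b sigma_X). *)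
Definition mix_diag (b : R) : C := (cos b, 0).
Definition mix_flip (b : R) : C := (0, - sin b).

(* e^{-i b} = cos b + (-i sin b): the row sum of exp(-i b sigma_X). *)
Lemma phase_split (b : R) : phase b = (mix_diag b + mix_flip b)%C.
Proof. unfold phase, mix_diag, mix_flip, Cplus; simpl. f_equal; ring. Qed.

Lemma Cmod_mix_diag (b : R) : Cmod (mix_diag b) <= 1.
Proof. change (mix_diag b) with (RtoC (cos b)). rewrite Cmod_R. apply Rabs_le, COS_bound. Qed.

Lemma Cmod_mix_flip (b : R) : Cmod (mix_flip b) <= 1.
Proof.
  replace (mix_flip b) with (Ci * RtoC (- sin b))%C
    by (unfold mix_flip, Cmult, Ci, RtoC; simpl; f_equal; ring).
  rewrite Cmod_mult, Cmod_Ci, Cmod_R, Rmult_1_l, Rabs_Ropp.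
  apply Rabs_le, SIN_bound.
Qed.

Definition sumR (l : list nat) (f : nat -> R) : R :=
  fold_right (fun w acc => f w + acc) 0 l.

Lemma sumR_app (l1 l2 : list nat) (f : nat -> R) :
  sumR (l1 ++ l2) f = sumR l1 f + sumR l2 f.
Proof. induction l1 as [|a l1 IH]; simpl; [ring|]. rewrite IH. ring. Qed.

Lemma sumR_perm (l1 l2 : list nat) (f : nat -> R) :
  Permutation l1 l2 -> sumR l1 f = sumR l2 f.
Proof. induction 1; simpl; lra. Qed.

Lemma sumR_le_count (P : nat -> bool) (f : nat -> R) (bound : R) (l : list nat) :
  (forall w, In w l -> P w = false -> f w = 0) ->
  (forall w, In w l -> f w <= bound) ->
  sumR l f <= INR (length (filter P l)) * bound.
Proof.
  induction l as [|a l IH]; intros Hzero Hbound; simpl; [lra|].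
  assert (IHl : sumR l f <= INR (length (filter P l)) * bound)
    by (apply IH; intros w Hw; auto using in_cons).
  destruct (P a) eqn:HPa.
  - simpl length. rewrite S_INR. specialize (Hbound a (in_eq a l)). lra.
  - rewrite (Hzero a (in_eq a l) HPa). lra.
Qed.

Lemma count_not_both (A B : nat -> bool) (l : list nat) :
  (length (filter (fun w => negb (A w && B w)) l)
   + length (filter A l) + length (filter B l) <= 2 * length l)%nat.
Proof. induction l as [|a l IH]; simpl; auto. destruct (A a), (B a); simpl; lia. Qed.

(* mixer b s m applies exp(-i b sigma_X) to qubits s, ..., s+m-1; UB n b is mixer b 0 n. *)
Definition mixer (b : R) (s m : nat) (psi : nat -> C) : nat -> C :=
  fold_right (fun k acc => UBk b k acc) psi (seq s m).

Lemma mixer_S (b : R) (s m : nat) (psi : nat -> C) (z : nat) :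
  mixer b s (S m) psi z =
  (mix_diag b * mixer b (S s) m psi z
   + mix_flip b * mixer b (S s) m psi (Nat.lxor z (2 ^ s)))%C.
Proof. reflexivity. Qed.

Lemma mixer_sub (b : R) (s m : nat) (psi phi : nat -> C) (z : nat) :
  (mixer b s m psi z - mixer b s m phi z)%C =
  mixer b s m (fun w => psi w - phi w)%C z.
Proof. induction m as [|m IH] in s, z |- *; [reflexivity|]. rewrite !mixer_S, <- !IH. ring. Qed.

Lemma mixer_const (b : R) (s m : nat) (c : C) (z : nat) :
  mixer b s m (fun _ => c) z = (phase b ^ m * c)%C.
Proof.
  induction m as [|m IH] in s, z |- *; simpl Cpow.
  - change (c = 1 * c)%C. ring.
  - rewrite mixer_S, !IH, phase_split. ring.
Qed.

Fixpoint orbit (s m z : nat) : list nat :=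
  match m with
  | O => [z]
  | S m => orbit (S s) m z ++ orbit (S s) m (Nat.lxor z (2 ^ s))
  end.

Lemma mixer_norm_le (b : R) (s m : nat) (psi : nat -> C) (z : nat) :
  Cmod (mixer b s m psi z) <= sumR (orbit s m z) (fun w => Cmod (psi w)).
Proof.
  induction m as [|m IH] in s, z |- *; simpl orbit.
  { change (Cmod (psi z) <= Cmod (psi z) + 0). lra. }
  rewrite mixer_S, sumR_app.
  eapply Rle_trans; [apply Cmod_triangle|]. rewrite !Cmod_mult.
  pose proof (IH (S s) z). pose proof (IH (S s) (Nat.lxor z (2 ^ s))).
  pose proof (Cmod_mix_diag b). pose proof (Cmod_mix_flip b).
  pose proof (Cmod_ge_0 (mixer b (S s) m psi z)).
  pose proof (Cmod_ge_0 (mixer b (S s) m psi (Nat.lxor z (2 ^ s)))).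
  pose proof (Cmod_ge_0 (mix_diag b)). pose proof (Cmod_ge_0 (mix_flip b)).
  nra.
Qed.

Lemma orbit_length (s m z : nat) : length (orbit s m z) = (2 ^ m)%nat.
Proof.
  induction m as [|m IH] in s, z |- *; simpl; auto.
  rewrite length_app, !IH. lia.
Qed.

Lemma testbit_lxor_pow2_other (z s i : nat) :
  i <> s -> Nat.testbit (Nat.lxor z (2 ^ s)) i = Nat.testbit z i.
Proof.
  intro Hi. rewrite Nat.lxor_spec, Nat.pow2_bits_eqb.
  replace (s =? i)%nat with false by (symmetry; apply Nat.eqb_neq; lia).
  apply Bool.xorb_false_r.
Qed.

Lemma orbit_bits (s m z w : nat) : In w (orbit s m z) ->
  forall i, (i < s \/ s + m <= i)%nat -> Nat.testbit w i = Nat.testbit z i.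
Proof.
  induction m as [|m IH] in s, z |- *; simpl; intros Hw i Hi.
  - destruct Hw as [<-|[]]. reflexivity.
  - apply in_app_or in Hw as [Hw|Hw].
    + apply (IH _ _ Hw). lia.
    + rewrite (IH _ _ Hw) by lia. apply testbit_lxor_pow2_other. lia.
Qed.

Lemma orbit_NoDup (s m z : nat) : NoDup (orbit s m z).
Proof.
  induction m as [|m IH] in s, z |- *; simpl.
  - constructor; [tauto|constructor].
  - apply NoDup_app; auto. intros w H1 H2.
    pose proof (orbit_bits _ _ _ _ H1 s ltac:(lia)) as E1.
    pose proof (orbit_bits _ _ _ _ H2 s ltac:(lia)) as E2.
    rewrite E1, Nat.lxor_spec, Nat.pow2_bits_eqb, Nat.eqb_refl in E2.
    destruct (Nat.testbit z s); discriminate.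
Qed.

Lemma lt_pow2_high_bits (n w : nat) :
  (w < 2 ^ n)%nat <-> forall i, (n <= i)%nat -> Nat.testbit w i = false.
Proof.
  split.
  - intros Hw i Hi. rewrite <- (Nat.mod_small w (2 ^ n) Hw).
    now apply Nat.mod_pow2_bits_high.
  - intro Hhigh. replace w with (w mod 2 ^ n).
    + apply Nat.mod_upper_bound, Nat.pow_nonzero. lia.
    + apply Nat.bits_inj. intro i. destruct (Nat.lt_ge_cases i n).
      * now apply Nat.mod_pow2_bits_low.
      * rewrite Hhigh by lia. now apply Nat.mod_pow2_bits_high.
Qed.

Lemma in_basis (n w : nat) : In w (basis n) <-> (w < 2 ^ n)%nat.
Proof. unfold basis. rewrite in_seq. lia. Qed.

Lemma orbit_basis (n z : nat) : (z < 2 ^ n)%nat -> Permutation (orbit 0 n z) (basis n).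
Proof.
  intro Hz. apply NoDup_Permutation_bis.
  - apply orbit_NoDup.
  - unfold basis. rewrite length_seq, orbit_length. lia.
  - intros w Hw. apply in_basis, lt_pow2_high_bits. intros i Hi.
    rewrite (orbit_bits _ _ _ _ Hw) by lia.
    now apply lt_pow2_high_bits with n.
Qed.

Lemma UB_deviation (n : nat) (b : R) (psi : nat -> C) (c : C) (z : nat) :
  (z < 2 ^ n)%nat ->
  Cmod (UB n b psi z - phase b ^ n * c)%C <=
  sumR (basis n) (fun w => Cmod (psi w - c)%C).
Proof.
  intro Hz. change (UB n b psi z) with (mixer b 0 n psi z).
  rewrite <- (mixer_const b 0 n c z), mixer_sub.
  rewrite <- (sumR_perm _ _ _ (orbit_basis n z Hz)).
  apply mixer_norm_le.
Qed.

Lemma fold_Rmax_attained (f : nat -> R) (l : list nat) :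
  l <> [] -> (forall x, 0 <= f x) ->
  exists z, In z l /\ fold_right Rmax 0 (map f l) = f z.
Proof.
  intros Hl Hf. induction l as [|a l IH]; [congruence|].
  destruct l as [|b l'].
  - exists a. split; [now left|]. apply Rmax_left, Hf.
  - destruct IH as [z [Hz E]]; [discriminate|].
    change (fold_right Rmax 0 (map f (a :: b :: l')))
      with (Rmax (f a) (fold_right Rmax 0 (map f (b :: l')))).
    rewrite E. destruct (Rle_dec (f a) (f z)).
    + exists z. split; [now right|]. now apply Rmax_right.
    + exists a. split; [now left|]. apply Rmax_left. lra.
Qed.

Lemma pow2_pos (n : nat) : 0 < 2 ^ n.
Proof. apply pow_lt. lra. Qed.

Lemma INR_length_basis (n : nat) : INR (length (basis n)) = 2 ^ n.
Proof. unfold basis. rewrite length_seq, pow_INR. reflexivity. Qed.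

Lemma basis_nonempty (n : nat) : basis n <> [].
Proof.
  intro Hnil. assert (H0 : In 0%nat (basis n))
    by (apply in_basis; pose proof (Nat.pow_nonzero 2 n); lia).
  rewrite Hnil in H0. destruct H0.
Qed.

Lemma max_fraction_attained (n : nat) (count : nat -> nat) :
  exists z, (z < 2 ^ n)%nat /\
  INR (count z) =
  fold_right Rmax 0 (map (fun z => INR (count z) / 2 ^ n) (basis n)) * 2 ^ n.
Proof.
  destruct (fold_Rmax_attained (fun z => INR (count z) / 2 ^ n) (basis n))
    as [z [Hz ->]].
  - apply basis_nonempty.
  - intro x. apply Rle_mult_inv_pos; [apply pos_INR|apply pow2_pos].
  - exists z. split; [now apply in_basis|]. field. apply Rgt_not_eq, pow2_pos.
Qed.

Lemma Ceqb_true (a b : C) : Ceqb a b = true -> a = b.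
Proof.
  unfold Ceqb. destruct (Req_EM_T (fst a) (fst b)) as [E1|]; [|discriminate].
  destruct (Req_EM_T (snd a) (snd b)) as [E2|]; [|discriminate].
  intros _. destruct a, b; simpl in *; now subst.
Qed.

Lemma Reqb_true (a b : R) : Reqb a b = true -> a = b.
Proof. unfold Reqb. now destruct (Req_EM_T a b). Qed.

(* U_C(g) psi equals e^{-i g l} u wherever psi = u and H = l; elsewhere it is at distance
   at most 2M from that constant. *)
Lemma UC_deviation_sum (n : nat) (Hd : nat -> R) (g : R) (psi : nat -> C)
    (M : R) (u : C) (l : R) :
  (forall w, (w < 2 ^ n)%nat -> Cmod (psi w) <= M) -> Cmod u <= M ->
  sumR (basis n) (fun w => Cmod (UC Hd g psi w - phase (g * l) * u)%C) <=
  2 * M * (2 * 2 ^ n - INR (countC n psi u) - INR (countR n Hd l)).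
Proof.
  intros HM Hu.
  set (A := fun w => Ceqb (psi w) u). set (B := fun w => Reqb (Hd w) l).
  assert (Hcount := count_not_both A B (basis n)).
  apply le_INR in Hcount. rewrite !plus_INR, mult_INR, INR_length_basis in Hcount.
  change (countC n psi u) with (length (filter A (basis n))).
  change (countR n Hd l) with (length (filter B (basis n))).
  assert (HM0 : 0 <= M) by (pose proof (Cmod_ge_0 u); lra).
  eapply Rle_trans; [apply (sumR_le_count (fun w => negb (A w && B w)) _ (2 * M))|].
  - intros w _ Hw. destruct (A w) eqn:EA, (B w) eqn:EB; try discriminate.
    apply Ceqb_true in EA. apply Reqb_true in EB.
    change (UC Hd g psi w) with (phase (g * Hd w) * psi w)%C. rewrite EA, EB.
    replace (phase (g * l) * u - phase (g * l) * u)%C with (RtoC 0) by ring.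
    apply Cmod_0.
  - intros w Hw. apply in_basis in Hw.
    change (UC Hd g psi w) with (phase (g * Hd w) * psi w)%C.
    eapply Rle_trans; [apply Cmod_triangle|].
    rewrite Cmod_opp, !Cmod_mult, !Cmod_phase, !Rmult_1_l.
    specialize (HM w Hw). lra.
  - simpl (INR 2) in Hcount. nra.
Qed.

Lemma layer_bound (n : nat) (Hd : nat -> R) (b g : R) (psi : nat -> C) (M D : R) :
  (forall w, (w < 2 ^ n)%nat -> Cmod (psi w) <= M) -> D <= maxfracC n psi ->
  forall z, (z < 2 ^ n)%nat ->
  Cmod (UB n b (UC Hd g psi) z) <=
  M * (2 ^ (n + 1) * (2 - D - deltaH n Hd) + 1).
Proof.
  intros HM HD z Hz.
  destruct (max_fraction_attained n (fun w => countC n psi (psi w))) as [z1 [Hz1 E1]].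
  destruct (max_fraction_attained n (fun w => countR n Hd (Hd w))) as [z2 [_ E2]].
  fold (maxfracC n psi) in E1. fold (deltaH n Hd) in E2.
  set (c := (phase (g * Hd z2) * psi z1)%C).
  assert (Hc : Cmod c <= M)
    by (unfold c; rewrite Cmod_mult, Cmod_phase, Rmult_1_l; auto).
  pose proof (UB_deviation n b (UC Hd g psi) c z Hz) as Hdev.
  pose proof (UC_deviation_sum n Hd g psi M (psi z1) (Hd z2) HM (HM z1 Hz1)) as Hsum.
  fold c in Hsum.
  replace (UB n b (UC Hd g psi) z)
    with (phase b ^ n * c + (UB n b (UC Hd g psi) z - phase b ^ n * c))%C by ring.
  eapply Rle_trans; [apply Cmod_triangle|].
  rewrite Cmod_mult, Cmod_pow, Cmod_phase, pow1, Rmult_1_l, pow_add.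
  assert (0 <= M * 2 ^ n * (maxfracC n psi - D)).
  { apply Rmult_le_pos; [apply Rmult_le_pos|lra].
    - pose proof (Cmod_ge_0 c). lra.
    - apply Rlt_le, pow2_pos. }
  rewrite E1, E2 in Hsum. rewrite pow_1. lra.
Qed.

Lemma uniform_amplitude (n z : nat) : Cmod (psi0 n z) = 1 / sqrt (2 ^ n).
Proof.
  change (psi0 n z) with (RtoC (1 / sqrt (2 ^ n))). rewrite Cmod_R.
  apply Rabs_right, Rle_ge, Rle_mult_inv_pos; [lra|].
  apply sqrt_lt_R0, pow2_pos.
Qed.

Lemma maxfracC_const (n : nat) (c : C) : maxfracC n (fun _ => c) = 1.
Proof.
  destruct (max_fraction_attained n (fun w => countC n (fun _ => c) c)) as [_ [_ E]].
  fold (maxfracC n (fun _ => c)) in E.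
  assert (Hall : countC n (fun _ => c) c = length (basis n)).
  { unfold countC. f_equal. apply forallb_filter_id, forallb_forall.
    intros w _. unfold Ceqb. destruct (Req_EM_T (fst c) (fst c)); [|congruence].
    now destruct (Req_EM_T (snd c) (snd c)). }
  rewrite Hall, INR_length_basis in E.
  pose proof (pow2_pos n). nra.
Qed.

Lemma DeltaQ_0 (n : nat) (Hd : nat -> R) (beta gamma : nat -> R) :
  DeltaQ n Hd beta gamma 0 = 1.
Proof.
  unfold DeltaQ. cbn [seq map fold_right qaoa]. unfold psi0. rewrite maxfracC_const. apply Rmin_left. lra. Qed.

Lemma DeltaQ_le_maxfracC (n : nat) (Hd : nat -> R) (beta gamma : nat -> R) (p t : nat) :
  (t <= p)%nat -> DeltaQ n Hd beta gamma p <= maxfracC n (qaoa n Hd beta gamma t).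
Proof.
  intro Ht. unfold DeltaQ.
  assert (Hin : In (maxfracC n (qaoa n Hd beta gamma t))
                 (map (fun s => maxfracC n (qaoa n Hd beta gamma s)) (seq 0 (S p))))
    by (apply (in_map (fun s => maxfracC n (qaoa n Hd beta gamma s))), in_seq; lia).
  induction (map _ _) as [|x l IH]; simpl in *; [tauto|].
  destruct Hin as [<-|Hin]; [apply Rmin_l|].
  eapply Rle_trans; [apply Rmin_r|auto].
Qed.

Theorem proposition2 (n : nat) (Hd : nat -> R) (beta gamma : nat -> R) :
  DeltaQ n Hd beta gamma 0 = 1 /\
  forall (p z : nat), (1 <= p)%nat -> (z < 2 ^ n)%nat ->
    Cnorm (qaoa n Hd beta gamma p z) <=
      (2 ^ (n + 1) * (2 - DeltaQ n Hd beta gamma (p - 1) - deltaH n Hd) + 1) ^ p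
      * (1 / sqrt (2 ^ n)).
Proof.
  split; [apply DeltaQ_0|].
  intros p z _ Hz. rewrite Cnorm_Cmod.
  set (K := 2 ^ (n + 1) * (2 - DeltaQ n Hd beta gamma (p - 1) - deltaH n Hd) + 1).
  assert (Hdepth : forall t, (t <= p)%nat -> forall w, (w < 2 ^ n)%nat ->
            Cmod (qaoa n Hd beta gamma t w) <= K ^ t * (1 / sqrt (2 ^ n))).
  { induction t as [|t IH]; intros Ht w Hw.
    - cbn [qaoa pow]. rewrite uniform_amplitude. lra.
    - replace (K ^ S t * (1 / sqrt (2 ^ n))) with (K ^ t * (1 / sqrt (2 ^ n)) * K)
        by (simpl; ring).
      apply layer_bound; auto with arith.
      apply DeltaQ_le_maxfracC. lia. }
  now apply Hdepth.
Qed.
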